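(* Let $t\geq 5$ and let $H$ be the simple graph with vertex set $\{x_1,x_2,x_3,y_1,\dots,y_{t-4}\}$ whose edges are $x_1x_2,x_2x_3,x_1x_3$ and all edges $x_iy_j$ for $i\in\{1,2,3\}$, $1\leq j\leq t-4$. Then $L(H)$ has a $K_t$-immersion.
   Context: $L(H)$ is the simple graph with vertex set $E(H)$ in which two distinct edges of $H$ are adjacent iff they share an endpoint. A graph $G$ has a $K_t$-immersion if there is an injective map $\phi$ from the vertex set of $K_t$ to $V(G)$ and, for each pair $u\neq v$ of vertices of $K_t$, a path in $G$ joining $\phi(u)$ and $\phi(v)$, such that these paths are pairwise edge-disjoint. *)

From mathcomp Require Import all_boot.
Set Implicit Arguments. Unset Strict Implicit. Unset Printing Implicit Defensive.

Definition pedges (T : finType) (x : T) (s : seq T) : seq {set T} :=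
  [seq [set ab.1; ab.2] | ab <- zip (x :: s) s].

Definition has_Kt_immersion (T : finType) (adj : rel T) (t : nat) : Prop :=
  exists (phi : 'I_t -> T) (P : 'I_t -> 'I_t -> seq T),
    injective phi /\
    (forall u v : 'I_t, u < v ->
       [/\ path adj (phi u) (P u v), last (phi u) (P u v) = phi v
         & uniq (phi u :: P u v)]) /\
    (forall u v u' v' : 'I_t, u < v -> u' < v' -> (u, v) != (u', v') ->
       forall e, e \in pedges (phi u) (P u v) ->
                 e \notin pedges (phi u') (P u' v')).

(* The graph H: vertices x_1,x_2,x_3 (inl 'I_3) and y_1..y_n (inr 'I_n);
   edges: x_i x_j (i<>j) and x_i y_j. *)
Definition Hvert (n : nat) := ('I_3 + 'I_n)%type.

Definition Hadj (n : nat) : rel (Hvert n) :=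
  fun a b => match a, b with
             | inl i, inl j => i != j
             | inl _, inr _ => true
             | inr _, inl _ => true
             | inr _, inr _ => false
             end.

Definition is_Hedge (n : nat) (e : {set Hvert n}) : bool :=
  [exists a, exists b, Hadj a b && (e == [set a; b])].

Definition LHvert (n : nat) := {e : {set Hvert n} | is_Hedge e}.

Definition LHadj (n : nat) : rel (LHvert n) :=
  fun e f => (e != f) && ~~ [disjoint val e & val f].

(* Label x_1, x_2, x_3 by 0, 1, 2 and y_j by j + 2, and an edge of H by the
   increasing pair of its labels, so that L(H) becomes a graph on pairs of
   naturals with arithmetic adjacency.  Branch the K_t at the n = t - 4 edges
   x_1 y_j, at x_1 x_2, x_1 x_3, x_2 x_3 and at x_3 y_1.  The first n + 2 of
   them pairwise share x_1 and are joined by single edges of L(H); x_2 x_3 is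
   reached from x_1 y_j through x_2 y_j, and x_3 y_1 from x_1 y_j (j > 1)
   through x_3 y_j and from x_1 x_2 through x_2 y_1; all other routes are
   single edges.  Each edge of L(H) so used lies on exactly one route. *)

From mathcomp Require Import all_boot zify.

Set Implicit Arguments.
Unset Strict Implicit.
Unset Printing Implicit Defensive.

Lemma set2_inj (T : finType) (x y z w : T) :
  [set x; y] = [set z; w] -> (x = z /\ y = w) \/ (x = w /\ y = z).
Proof.
move=> E.
have: x \in [set z; w] by rewrite -E !inE eqxx.
have: y \in [set z; w] by rewrite -E !inE eqxx orbT.
have: z \in [set x; y] by rewrite E !inE eqxx.
have: w \in [set x; y] by rewrite E !inE eqxx orbT.
by rewrite !inE => /orP[]/eqP? /orP[]/eqP? /orP[]/eqP? /orP[]/eqP?; subst; tauto.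
Qed.

Lemma mem_zip (S U : eqType) (s : seq S) (r : seq U) p :
  p \in zip s r -> (p.1 \in s) && (p.2 \in r).
Proof.
elim: s r => [|x s IHs] [|y r] //=; rewrite inE => /orP[/eqP-> | /IHs /andP[]].
  by rewrite !inE !eqxx.
by rewrite !inE => -> ->; rewrite !orbT.
Qed.

Lemma valid_zip (S : eqType) (valid : pred S) z s w :
  all valid (z :: s) -> w \in zip (z :: s) s -> valid w.1 /\ valid w.2.
Proof.
move=> /allP Vs /mem_zip /andP[/Vs V1 V2]; split=> //.
by apply: Vs; rewrite inE V2 orbT.
Qed.

Section ImmersionTransfer.
Variables (C : eqType) (T : finType) (adjC : rel C) (adj : rel T).
Variables (valid : pred C) (f : C -> T).
Hypothesis f_inj : {in valid &, injective f}.
Hypothesis f_adj : {in valid &, forall a b, adjC a b -> adj (f a) (f b)}.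

Lemma pedges_map x s :
  pedges (f x) (map f s) = [seq [set f p.1; f p.2] | p <- zip (x :: s) s].
Proof. by elim: s x => [|y s IHs] x //=; rewrite /pedges /= -IHs. Qed.

Lemma Kt_immersion_transfer t (phi : 'I_t -> C) (P : 'I_t -> 'I_t -> seq C) :
  injective phi -> (forall u, valid (phi u)) ->
  (forall u v : 'I_t, u < v ->
     [/\ path adjC (phi u) (P u v), last (phi u) (P u v) = phi v,
         uniq (phi u :: P u v) & all valid (phi u :: P u v)]) ->
  (forall (u v u' v' : 'I_t) p q, u < v -> u' < v' ->
     p \in zip (phi u :: P u v) (P u v) ->
     q \in zip (phi u' :: P u' v') (P u' v') ->
     p = q \/ p = (q.2, q.1) -> (u, v) = (u', v')) ->
  has_Kt_immersion adj t.
Proof.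
move=> phi_inj phi_valid routeP route_disj.
exists (f \o phi), (fun u v => map f (P u v)); split; [|split].
- by move=> u v /f_inj => /(_ (phi_valid u) (phi_valid v)) /phi_inj.
- move=> u v /routeP[adj_route last_route uniq_route valid_route]; split.
  + by rewrite /= path_map; apply: sub_in_path valid_route adj_route => a b Va Vb /f_adj; apply.
  + by rewrite /= last_map last_route.
  + rewrite -[_ :: _]/(map f (phi u :: P u v)) map_inj_in_uniq // => a b Ra Rb.
    by apply: f_inj; apply: (allP valid_route).
- move=> u v u' v' uv uv' neq_uv e; rewrite /= !pedges_map.
  case/mapP=> p Rp ->; apply/mapP=> -[q Rq /set2_inj same_pq].
  have [_ _ _ Vuv] := routeP _ _ uv; have [_ _ _ Vuv'] := routeP _ _ uv'.
  have [Vp1 Vp2] := valid_zip Vuv Rp; have [Vq1 Vq2] := valid_zip Vuv' Rq.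
  move/eqP: neq_uv; apply; apply: (route_disj _ _ _ _ _ _ uv uv' Rp Rq).
  case: p q {Rp Rq} same_pq Vp1 Vp2 Vq1 Vq2 => [a b] [c d] /= same Va Vb Vc Vd.
  by case: same => -[fac fbd]; [left | right]; congr (_, _); apply: f_inj.
Qed.
End ImmersionTransfer.

Section LabelledLineGraph.
Variable n : nat.

Definition label_edge (e : nat * nat) : bool := (e.1 < 3) && (e.1 < e.2 < n.+3).

Definition share_end (e f : nat * nat) : bool :=
  (e != f) && [|| e.1 == f.1, e.1 == f.2, e.2 == f.1 | e.2 == f.2].

Definition branch (u : nat) : nat * nat :=
  if u < n then (0, u + 3) else if u == n then (0, 1)
  else if u == n.+1 then (0, 2) else if u == n.+2 then (1, 2) else (2, 3).

Definition route (u v : nat) : seq (nat * nat) :=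
  if v < n.+2 then [:: branch v]
  else if v == n.+2 then (if u < n then [:: (1, u + 3); (1, 2)] else [:: (1, 2)])
  else if u == 0 then [:: (2, 3)]
  else if u < n then [:: (2, u + 3); (2, 3)]
  else if u == n then [:: (1, 3); (2, 3)]
  else [:: (2, 3)].

Lemma branch_inj u v : u < n + 4 -> v < n + 4 -> branch u = branch v -> u = v.
Proof.
move=> ? ? /eqP; rewrite /branch.
by repeat case: ifP => ?; rewrite xpair_eqE; lia.
Qed.

Hypothesis n_gt0 : 0 < n.

Lemma label_edge_branch u : u < n + 4 -> label_edge (branch u).
Proof. by rewrite /label_edge /branch; repeat case: ifP => /=; lia. Qed.

Lemma routeP u v : u < v < n + 4 ->
  [/\ path share_end (branch u) (route u v), last (branch u) (route u v) = branch v,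
      uniq (branch u :: route u v) & all label_edge (branch u :: route u v)].
Proof.
move=> /andP[uv vt]; rewrite /route /branch /share_end /label_edge.
by repeat case: ifP => ?; rewrite /= ?inE ?xpair_eqE /= ?andbT; split=> //; lia.
Qed.

Lemma route_edge_disjoint u v u' v' p q : u < v < n + 4 -> u' < v' < n + 4 ->
  p \in zip (branch u :: route u v) (route u v) ->
  q \in zip (branch u' :: route u' v') (route u' v') ->
  p = q \/ p = (q.2, q.1) -> u = u' /\ v = v'.
Proof.
case: p q => [[a1 a2] [b1 b2]] [[c1 c2] [d1 d2]] uvt uvt' Pin Qin same.
have {same} : [&& a1 == c1, a2 == c2, b1 == d1 & b2 == d2]
           || [&& a1 == d1, a2 == d2, b1 == c1 & b2 == c2].
  by case: same => -[-> -> -> ->]; rewrite !eqxx ?orbT.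
move: Pin Qin; rewrite /route /branch.
by repeat (case: ifP => ?; try (exfalso; lia)); rewrite /= !inE ?xpair_eqE; lia.
Qed.
End LabelledLineGraph.

Section LineGraphOfH.
Variable m : nat.
Local Notation n := m.+1.

Definition vertex_of_label (l : nat) : Hvert n :=
  if l < 3 then inl (inord l) else inr (inord (l - 3)).

Lemma vertex_of_label_inj k l : k < n.+3 -> l < n.+3 ->
  vertex_of_label k = vertex_of_label l -> k = l.
Proof.
rewrite /vertex_of_label => ? ?; case: ifP => ?; case: ifP => ? // [] /eqP;
  by rewrite -val_eqE /= !inordK //; lia.
Qed.

Lemma Hadj_label e : label_edge n e -> Hadj (vertex_of_label e.1) (vertex_of_label e.2).
Proof.
rewrite /label_edge /vertex_of_label => /andP[e1 /andP[e12 e2]].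
rewrite e1; case: ifP => //= e2'.
by rewrite -val_eqE /= !inordK //; lia.
Qed.

Lemma is_Hedge_label e :
  label_edge n e -> is_Hedge [set vertex_of_label e.1; vertex_of_label e.2].
Proof.
move=> /Hadj_label adj_e; apply/existsP; exists (vertex_of_label e.1).
by apply/existsP; exists (vertex_of_label e.2); rewrite adj_e /=.
Qed.

Definition edge_of_label (e : nat * nat) : LHvert n :=
  insubd (Sub _ (@is_Hedge_label (0, 1) isT))
         [set vertex_of_label e.1; vertex_of_label e.2].

Lemma val_edge_of_label e : label_edge n e ->
  val (edge_of_label e) = [set vertex_of_label e.1; vertex_of_label e.2].
Proof. by move=> /is_Hedge_label He; rewrite /edge_of_label insubdK. Qed.

Lemma edge_of_label_inj : {in label_edge n &, injective edge_of_label}.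
Proof.
move=> [a b] [c d] Lab Lcd /(congr1 val); rewrite !val_edge_of_label //=.
move: Lab Lcd => /andP[_ /= /andP[ab bn]] /andP[_ /= /andP[cd dn]].
have an : a < n.+3 by lia.
have cn : c < n.+3 by lia.
case/set2_inj=> -[Eac Ebd].
  by rewrite (vertex_of_label_inj an cn Eac) (vertex_of_label_inj bn dn Ebd).
by move: (vertex_of_label_inj an dn Eac) (vertex_of_label_inj bn cn Ebd); lia.
Qed.

Lemma vertex_of_label_in_set2 x y z : z \in [:: x; y] ->
  vertex_of_label z \in [set vertex_of_label x; vertex_of_label y].
Proof. by rewrite !inE => /orP[]/eqP->; rewrite eqxx ?orbT. Qed.

Lemma share_end_LHadj :
  {in label_edge n &, forall e f, share_end e f -> LHadj (edge_of_label e) (edge_of_label f)}.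
Proof.
move=> e f Le Lf /andP[neq_ef shared]; apply/andP; split.
  by apply: contra neq_ef => /eqP/edge_of_label_inj-> //.
have [l le lf] : exists2 l, l \in [:: e.1; e.2] & l \in [:: f.1; f.2].
  by case/or4P: shared => /eqP E; [exists e.1 | exists e.1 | exists e.2 | exists e.2];
    rewrite !inE E eqxx ?orbT.
rewrite !val_edge_of_label //; apply/negP => /disjointFr disj_ef.
by move: (disj_ef _ (vertex_of_label_in_set2 le)); rewrite vertex_of_label_in_set2.
Qed.

Lemma LH_Kt_immersion : has_Kt_immersion (@LHadj n) (n + 4).
Proof.
have uvP (u v : 'I_(n + 4)) : u < v -> u < v < n + 4 by move=> ->; rewrite ltn_ord.
apply: (Kt_immersion_transfer edge_of_label_inj share_end_LHadj
          (phi := fun u => branch n u) (P := fun u v => route n u v)).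
- by move=> u v /(branch_inj (ltn_ord u) (ltn_ord v)) /val_inj.
- by move=> u; apply: label_edge_branch.
- by move=> u v /uvP; apply: routeP.
move=> u v u' v' p q /uvP uv /uvP uv' Rp Rq same_pq.
by have [/val_inj-> /val_inj->] := route_edge_disjoint (ltn0Sn m) uv uv' Rp Rq same_pq.
Qed.
End LineGraphOfH.

Theorem mainTheorem11 (t : nat) (ht : 5 <= t) :
  has_Kt_immersion (@LHadj (t - 4)) t.
Proof.
have [m ->] : exists m, t = m.+1 + 4 by exists (t - 5); lia.
by rewrite addnK; apply: LH_Kt_immersion.
Qed.
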